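(* The following implementation of the extended weak descriptor abstract data type is lock-free: in every execution in which processes take infinitely many steps, infinitely many of the descriptor operations CreateNew, ReadField, ReadImmutables, WriteField, CASField terminate. Implementation: for each descriptor type $T$ and process $p$ there is one shared object $D_{T,p}$ holding the immutable fields of type $T$ and a single word $mutables$ containing a sequence number $seq$ (initially $0$) and all mutable fields, read and CASed atomically as one word. A descriptor pointer is a pair $\langle q,s\rangle$. - $\mathrm{CreateNew}(T,v_1,\ldots)$ by $p$: $oldseq:=D_{T,p}.mutables.seq$; set the sequence number to $oldseq+1$; write every field with its value; set the sequence number to $oldseq+2$; return $\langle p, oldseq+2\rangle$. - $\mathrm{ReadField}(\langle q,s\rangle,f,dv)$: read field $f$ of $D_{T,q}$, then read $D_{T,q}.mutables.seq$; return $dv$ if it differs from $s$, else the value read. - $\mathrm{ReadImmutables}(\langle q,s\rangle)$: read all immutable fields of $D_{T,q}$, then the sequence number; return $\bot$ if it differs from $s$, else the values read. - $\mathrm{WriteField}(\langle q,s\rangle,f,v)$: repeat: $exp:=D_{T,q}.mutables$; if $exp.seq\ne s$ return; $new:=exp$ with $f$ set to $v$; if $\mathrm{CAS}(D_{T,q}.mutables,exp,new)$ succeeds return. - $\mathrm{CASField}(\langle q,s\rangle,f,fexp,fnew)$: repeat: $exp:=D_{T,q}.mutables$; if $exp.seq\ne s$ return $\bot$; if $exp.f\ne fexp$ return $exp.f$; $new:=exp$ with $f$ set to $fnew$; if $\mathrm{CAS}(D_{T,q}.mutables,exp,new)$ succeeds return.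
   Context: Asynchronous shared-memory system of processes; shared memory consists of base objects supporting read, write and compare-and-swap (CAS), each step being atomic. An execution is an alternating sequence of configurations and steps. A CAS$(x, exp, new)$ atomically changes $x$ to $new$ and succeeds if $x=exp$, and otherwise fails without changing $x$. Sequence numbers are unbounded. *)

From mathcomp Require Import all_boot.
Set Implicit Arguments. Unset Strict Implicit. Unset Printing Implicit Defensive.

Section WeakDescriptor.

(* DT : descriptor types; P : the (finitely many) processes; V : field values.
   nimm T / nmut T : number of immutable / mutable fields of type T. *)
Variables (DT : eqType) (P : finType) (V : eqType).
Variables (nimm nmut : DT -> nat).

(* the single word D_{T,p}.mutables : (sequence number, mutable fields) *)
Definition word := (nat * seq V)%type.

(* shared memory: immutable field i of D_{T,p}, and D_{T,p}.mutables *)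
Record mem := Mem { imm : DT -> P -> nat -> V ; muts : DT -> P -> word }.

Definition upd_imm (m : mem) (T : DT) (p : P) (i : nat) (v : V) : mem :=
  Mem (fun T' p' i' => if [&& T' == T, p' == p & i' == i] then v else imm m T' p' i')
      (muts m).

Definition upd_muts (m : mem) (T : DT) (p : P) (w : word) : mem :=
  Mem (imm m) (fun T' p' => if (T' == T) && (p' == p) then w else muts m T' p').

(* Operations (invocations).  A descriptor pointer <q,s> of type T is given
   by T, q, s.  A field for ReadField is [inl i] (immutable field i) or
   [inr j] (mutable field j). *)
Inductive op :=
| CreateNew of DT & seq V & seq V          (* T, immutable values, mutable values *)
| ReadField of DT & P & nat & (nat + nat) & V   (* T, q, s, f, dv *)
| ReadImmutables of DT & P & nat                (* T, q, s *)
| WriteField of DT & P & nat & nat & V          (* T, q, s, f, v *)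
| CASField of DT & P & nat & nat & V & V.       (* T, q, s, f, fexp, fnew *)

Definition valid_op (o : op) : Prop :=
  match o with
  | CreateNew T vi vm => size vi = nimm T /\ size vm = nmut T
  | ReadField T _ _ (inl i) _ => i < nimm T
  | ReadField T _ _ (inr j) _ => j < nmut T
  | ReadImmutables _ _ _ => True
  | WriteField T _ _ f _ => f < nmut T
  | CASField T _ _ f _ _ => f < nmut T
  end.

Inductive lstate :=
| Idle
| CN1 of DT & seq V & seq V                 (* read mutables (oldseq) *)
| CN2 of DT & seq V & seq V & word          (* set seq to oldseq+1 *)
| CN3 of DT & seq V & nat & nat & seq V     (* T, vm, oldseq, i, remaining imm values: write imm field i *)
| CN4 of DT & seq V & nat                   (* write mutable fields *)
| CN5 of DT & seq V & nat                   (* set seq to oldseq+2, return *)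
| RF1 of DT & P & nat & (nat + nat) & V     (* read field f *)
| RF2 of DT & P & nat & V & option V        (* read seq, return *)
| RI1 of DT & P & nat & nat & seq V         (* read immutable field i *)
| RI2 of DT & P & nat & seq V               (* read seq, return *)
| WF1 of DT & P & nat & nat & V             (* exp := mutables *)
| WF2 of DT & P & nat & nat & V & word      (* CAS *)
| CF1 of DT & P & nat & nat & V & V         (* exp := mutables *)
| CF2 of DT & P & nat & nat & V & V & word. (* CAS *)

Definition cn_imm T vm old i (rest : seq V) : lstate :=
  if rest is _ :: _ then CN3 T vm old i rest else CN4 T vm old.

Definition ri_next T q s i acc : lstate :=
  if i < nimm T then RI1 T q s i acc else RI2 T q s acc.

Definition start (o : op) : lstate :=
  match o with
  | CreateNew T vi vm => CN1 T vi vm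
  | ReadField T q s f dv => RF1 T q s f dv
  | ReadImmutables T q s => ri_next T q s 0 [::]
  | WriteField T q s f v => WF1 T q s f v
  | CASField T q s f fexp fnew => CF1 T q s f fexp fnew
  end.

(* one atomic shared-memory step (read, write or CAS, with the local
   computation around it) of a busy process p *)
Definition pstep (p : P) (m : mem) (l : lstate) : mem * lstate :=
  match l with
  | Idle => (m, Idle)
  | CN1 T vi vm => (m, CN2 T vi vm (muts m T p))
  | CN2 T vi vm w => (upd_muts m T p (w.1.+1, w.2), cn_imm T vm w.1 0 vi)
  | CN3 T vm old i rest =>
      match rest with
      | v :: rest' => (upd_imm m T p i v, cn_imm T vm old i.+1 rest')
      | [::] => (m, CN4 T vm old)
      end
  | CN4 T vm old => (upd_muts m T p (old.+1, vm), CN5 T vm old)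
  | CN5 T vm old => (upd_muts m T p (old.+2, vm), Idle)   (* returns <p, old+2> *)
  | RF1 T q s f dv =>
      let x := match f with
               | inl i => Some (imm m T q i)
               | inr j => onth (muts m T q).2 j
               end in
      (m, RF2 T q s dv x)
  | RF2 T q s dv x => (m, Idle)    (* returns dv if seq != s, else x *)
  | RI1 T q s i acc => (m, ri_next T q s i.+1 (rcons acc (imm m T q i)))
  | RI2 T q s acc => (m, Idle)     (* returns bot if seq != s, else acc *)
  | WF1 T q s f v =>
      let exp := muts m T q in
      if exp.1 != s then (m, Idle) else (m, WF2 T q s f v exp)
  | WF2 T q s f v exp =>
      if muts m T q == exp
      then (upd_muts m T q (exp.1, set_nth v exp.2 f v), Idle)
      else (m, WF1 T q s f v)
  | CF1 T q s f fexp fnew =>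
      let exp := muts m T q in
      if exp.1 != s then (m, Idle)                       (* returns bot *)
      else if onth exp.2 f != Some fexp then (m, Idle)   (* returns exp.f *)
      else (m, CF2 T q s f fexp fnew exp)
  | CF2 T q s f fexp fnew exp =>
      if muts m T q == exp
      then (upd_muts m T q (exp.1, set_nth fnew exp.2 f fnew), Idle)
      else (m, CF1 T q s f fexp fnew)
  end.

Record config := Config { cmem : mem ; loc : P -> lstate }.

Definition set_loc (c : config) (p : P) (l : lstate) (m : mem) : config :=
  Config m (fun p' => if p' == p then l else loc c p').

Definition step (c : config) (p : P) (c' : config) : Prop :=
  (loc c p = Idle /\ exists o, valid_op o /\ c' = set_loc c p (start o) (cmem c))
  \/ (loc c p <> Idle /\
      c' = set_loc c p (pstep p (cmem c) (loc c p)).2 (pstep p (cmem c) (loc c p)).1).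

Definition initial (c : config) : Prop :=
  (forall p, loc c p = Idle) /\
  (forall T p, (muts (cmem c) T p).1 = 0 /\ size (muts (cmem c) T p).2 = nmut T).

Definition execution (c : nat -> config) (sched : nat -> P) : Prop :=
  initial (c 0) /\ forall i, step (c i) (sched i) (c i.+1).

Definition completes (c : nat -> config) (sched : nat -> P) (i : nat) : Prop :=
  loc (c i) (sched i) <> Idle /\ loc (c i.+1) (sched i) = Idle.

End WeakDescriptor.

From Pilot Require Import Defs.
From mathcomp Require Import all_boot zify.
From Stdlib Require Import Classical.
Set Implicit Arguments. Unset Strict Implicit. Unset Printing Implicit Defensive.

(* If no operation completed from some step on, a mutables word could only be
   changed by the first two writes of a CreateNew to it (a successful CAS and
   the third write of CreateNew complete their operation), and a process can
   perform at most two such writes before it would have to invoke a new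
   operation, i.e. complete its current one.  Between such writes every process
   makes progress towards completion, a failed CAS being paid for by the write
   that made its expected value stale.  So the pair (pending CreateNew writes,
   steps left), summed over all processes, decreases lexicographically at
   every step, which cannot go on forever. *)

Lemma ltn_sum_at (I : finType) (F G : I -> nat) (i : I) :
  F i < G i -> (forall j, j != i -> F j = G j) ->
  \sum_(j : I) F j < \sum_(j : I) G j.
Proof.
move=> ltFGi eqFG; rewrite (bigD1 i) //= [X in _ < X](bigD1 i) //=.
by rewrite (eq_bigr G) ?ltn_add2r // => j /andP[_ /eqFG].
Qed.

Lemma no_lex_descent (f g : nat -> nat) (N : nat) :
  ~ (forall i, N <= i -> f i.+1 < f i \/ f i.+1 = f i /\ g i.+1 < g i).
Proof.
move=> descent.
suff no_start a b i : N <= i -> f i < a -> g i < b -> False.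
  exact: (no_start (f N).+1 (g N).+1 N).
elim: a b i => // a IHa; elim=> // b IHb i Ni fi_lt gi_lt.
case: (descent i Ni) => [f_lt | [f_eq g_lt]].
- by apply: (IHa (g i.+1).+1 i.+1) => //; [exact: leqW | exact: leq_trans f_lt fi_lt].
- by apply: (IHb i.+1) => //; [exact: leqW | rewrite f_eq | exact: leq_trans g_lt gi_lt].
Qed.

Section Potential.

Variables (DT : eqType) (P : finType) (V : eqType) (nimm nmut : DT -> nat).

Local Notation lstate := (lstate DT P V).
Local Notation config := (config DT P V).
Local Notation idle := (Idle DT P V).

(* Writes to a mutables word that [l] may still perform without completing its
   operation; an idle process is charged more than any operation it may
   invoke. *)
Definition pending_writes (l : lstate) : nat :=
  match l with
  | Idle => 3
  | CN1 _ _ _ | CN2 _ _ _ _ => 2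
  | CN3 _ _ _ _ _ | CN4 _ _ _ => 1
  | _ => 0
  end.

(* A bound on the number of steps [l] needs to complete while the mutables
   words stay [mu]; a CAS against a stale expectation costs one retry. *)
Definition steps_left (mu : DT -> P -> word V) (l : lstate) : nat :=
  match l with
  | Idle | CN5 _ _ _ | RF2 _ _ _ _ _ | RI2 _ _ _ _ => 0
  | CN1 _ vi _ => size vi + 5
  | CN2 _ vi _ _ => size vi + 4
  | CN3 _ _ _ _ rest => size rest + 2
  | CN4 _ _ _ | RF1 _ _ _ _ _ => 1
  | RI1 T _ _ i _ => (nimm T - i).+1
  | WF1 _ _ _ _ _ | CF1 _ _ _ _ _ _ => 2
  | WF2 T q _ _ _ exp | CF2 T q _ _ _ _ exp => if mu T q == exp then 1 else 3
  end.

Lemma start_pending_writes (o : op DT P V) :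
  pending_writes (start nimm o) < pending_writes idle.
Proof. by case: o => //= T q s; rewrite /ri_next; case: ifP. Qed.

Lemma pstep_descent (p : P) (m m' : Defs.mem DT P V) (l l' : lstate) :
  pstep nimm p m l = (m', l') -> l' <> idle ->
  pending_writes l' < pending_writes l \/
  [/\ pending_writes l' = pending_writes l, muts m' = muts m
    & steps_left (muts m) l' < steps_left (muts m) l].
Proof.
case: l => /=.
- by case=> _ <-.
- by move=> T vi vm [<- <-] _; right; split=> //=; lia.
- by move=> T vi vm w [_ <-] _; left; case: vi.
- move=> T vm old i [|v rest] [<- <-] _; right; first by split.
  by case: rest => [|w rest]; split=> //=; lia.
- by move=> T vm old [_ <-] _; left.
- by move=> T vm old [_ <-].
- by move=> T q s f dv [<- <-] _; right.
- by move=> T q s dv x [_ <-].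
- move=> T q s i acc [<- <-] _; right.
  by rewrite /ri_next; case: ifP => lt_i; split=> //=; lia.
- by move=> T q s acc [_ <-].
- by move=> T q s f v; case: ifP => _ [<- <-] // _; right; rewrite /= eqxx.
- by move=> T q s f v exp; case: ifP => _ [<- <-] // _; right.
- move=> T q s f e n; case: ifP => _; first by case=> _ <-.
  by case: ifP => _ [<- <-] // _; right; rewrite /= eqxx.
- by move=> T q s f e n exp; case: ifP => _ [<- <-] // _; right.
Qed.

Definition pending_writes_sum (c : config) : nat :=
  \sum_(q : P) pending_writes (loc c q).

Definition steps_left_sum (c : config) : nat :=
  \sum_(q : P) steps_left (muts (cmem c)) (loc c q).

Lemma step_descent (c c' : config) (p : P) :
  step nimm nmut c p c' -> (loc c' p = idle -> loc c p = idle) ->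
  pending_writes_sum c' < pending_writes_sum c \/
  pending_writes_sum c' = pending_writes_sum c /\ steps_left_sum c' < steps_left_sum c.
Proof.
rewrite /pending_writes_sum /steps_left_sum.
case=> [[idle_p [o [_ ->]]] _ | [busy_p ->]].
  left; apply: (ltn_sum_at (i := p)); first by rewrite /= eqxx idle_p start_pending_writes.
  by move=> q /negbTE q_p; rewrite /= q_p.
case pstep_p: pstep => [m' l'] /=; rewrite eqxx => not_done.
have [|lt_pw | [eq_pw eq_muts lt_sl]] := pstep_descent pstep_p.
- by move=> idle_l'; apply/busy_p/not_done.
- left; apply: (ltn_sum_at (i := p)); first by rewrite /= eqxx.
  by move=> q /negbTE q_p; rewrite /= q_p.
right; split.
  by apply: eq_bigr => q _ /=; case: eqP => // ->.
apply: (ltn_sum_at (i := p)); first by rewrite /= eqxx eq_muts.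
by move=> q /negbTE q_p; rewrite /= q_p eq_muts.
Qed.

End Potential.

Theorem mainTheorem2 (DT : eqType) (P : finType) (V : eqType)
    (nimm nmut : DT -> nat)
    (c : nat -> config DT P V) (sched : nat -> P) :
  execution nimm nmut c sched ->
  forall N : nat, exists i : nat, N <= i /\ completes c sched i.
Proof.
move=> [_ steps] N; apply: NNPP => no_completion.
apply: (@no_lex_descent (fun i => pending_writes_sum (c i)) (fun i => steps_left_sum nimm (c i)) N).
move=> i Ni; apply: (step_descent (steps i)) => idle_next.
by apply: NNPP => busy; apply: no_completion; exists i.
Qed.
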